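(* Let $G=(V,E)$ be a finite graph with no isolated vertices, with adjacency matrix $A$, degree matrix $D=\mathrm{diag}(d_u)$ and Laplacian $L=D-A$. Let $\boldsymbol\beta,\boldsymbol\gamma,\boldsymbol\lambda\in\mathbb R^V$ be such that $G$ has local $(\boldsymbol\beta,\boldsymbol\gamma,\boldsymbol\lambda)$-occupancy and for all $u\in V$: \[ \beta_u,\gamma_u,\lambda_u>0,\qquad d_u\frac{\gamma_u}{\beta_u}<1,\qquad \sum_{v\in N(u)}\frac{\gamma_v}{\beta_v}\le 1. \] Let $B=\mathrm{diag}(\boldsymbol\beta)$, $\Gamma=\mathrm{diag}(\boldsymbol\gamma)$ and $H=B+D\Gamma$. Then $B+A\Gamma$ is invertible, the vector $\mathbf y'=(B+A\Gamma)^{-1}\mathbf 1$ satisfies $\mathbf y'\ge\mathbf 0$ and $(B+A\Gamma)\mathbf y'\le\mathbf 1$ (i.e. it is feasible for the LP $\max\{\mathbf 1^{\mathsf T}\mathbf y:\ \mathbf y\ge\mathbf 0,\ (B+A\Gamma)\mathbf y\le\mathbf 1\}$), and moreover the spectral radius satisfies $\rho(L\Gamma H^{-1})<1$.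
   Context: Given $\boldsymbol\beta,\boldsymbol\gamma,\boldsymbol\lambda\in[0,\infty)^V$, $G$ has local $(\boldsymbol\beta,\boldsymbol\gamma,\boldsymbol\lambda)$-occupancy if for each $u\in V$, $\beta_u\Pr_{G,\boldsymbol\lambda}(u\in X)+\gamma_u\sum_{v\in N_G(u)}\Pr_{G,\boldsymbol\lambda}(v\in X)\ge1$, where $X$ is drawn from the hard-core model $\Pr_{G,\boldsymbol\lambda}(I)\propto\prod_{v\in I}\lambda_v$ on independent sets $I$ of $G$. Vector inequalities are entrywise; $\rho(T)$ is the maximum absolute value of an eigenvalue of $T$. *)

From HB Require Import structures.
From mathcomp Require Import all_boot all_order all_algebra.
From mathcomp Require Import complex.
Set Implicit Arguments. Unset Strict Implicit. Unset Printing Implicit Defensive.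
Import Order.TTheory GRing.Theory Num.Theory.
Local Open Scope ring_scope.

Definition simple_graph n (adj : rel 'I_n) : Prop :=
  symmetric adj /\ irreflexive adj.

Definition nbhd n (adj : rel 'I_n) (u : 'I_n) : {set 'I_n} := [set v | adj u v].
Definition deg n (adj : rel 'I_n) (u : 'I_n) : nat := #|nbhd adj u|.

Definition independent n (adj : rel 'I_n) (I : {set 'I_n}) : bool :=
  [forall u in I, forall v in I, ~~ adj u v].

Definition hc_weight (R : numFieldType) n (lam : 'I_n -> R) (I : {set 'I_n}) : R :=
  \prod_(v in I) lam v.
Definition hc_Z (R : numFieldType) n (adj : rel 'I_n) (lam : 'I_n -> R) : R :=
  \sum_(I : {set 'I_n} | independent adj I) hc_weight lam I.
Definition hc_prob (R : numFieldType) n (adj : rel 'I_n) (lam : 'I_n -> R) (u : 'I_n) : R :=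
  (\sum_(I : {set 'I_n} | independent adj I && (u \in I)) hc_weight lam I)
  / hc_Z adj lam.

Definition local_occupancy (R : numFieldType) n (adj : rel 'I_n)
  (beta gamma lam : 'I_n -> R) : Prop :=
  forall u, beta u * hc_prob adj lam u
            + gamma u * \sum_(v in nbhd adj u) hc_prob adj lam v >= 1.

Definition adjmx (R : numFieldType) n (adj : rel 'I_n) : 'M[R]_n :=
  \matrix_(i, j) (adj i j)%:R.
Definition degmx (R : numFieldType) n (adj : rel 'I_n) : 'M[R]_n :=
  \matrix_(i, j) ((i == j)%:R * (deg adj i)%:R).
Definition diagf (R : numFieldType) n (f : 'I_n -> R) : 'M[R]_n :=
  \matrix_(i, j) ((i == j)%:R * f i).

Definition spectral_radius_lt1 (R : rcfType) n (T : 'M[R]_n) : Prop :=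
  forall z : R[i], eigenvalue (map_mx (fun x : R => x%:C%C) T) z -> `|z| < 1.

From mathcomp Require Import all_boot all_order all_algebra.
From mathcomp Require Import complex.
From mathcomp Require Import ring lra.
Set Implicit Arguments. Unset Strict Implicit. Unset Printing Implicit Defensive.
Import Order.TTheory GRing.Theory Num.Theory.
Local Open Scope ring_scope.

(* One estimate drives everything: if c > 0 and sum_w c_w |T_uw| < c_u for all u,
   then the weighted l1 norm sum_w c_w |v_w| of a left eigenvector v of T strictly
   shrinks, so every eigenvalue of T has modulus < 1.  With c = beta/gamma this
   applies to T = A Gam B^-1, whose weighted row sums are the degrees
   d_u < beta_u/gamma_u; hence -1 is not an eigenvalue and B + A Gam = (1 + T) B
   is invertible.  With c = h/gamma, h = beta + d gamma, it applies to L Gam H^-1,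
   whose weighted row sums are at most 2 d_u < h_u/gamma_u.  Finally z = B y'
   solves z + T z = 1, where T >= 0 has row sums <= 1 and column sums
   d_v gamma_v/beta_v < 1; the distance of z to the cube [0,1]^V is then
   T-subinvariant, and column sums < 1 force it to vanish. *)

Section WeightedRowSums.
Variables (C : numDomainType) (n : nat) (T : 'M[C]_n) (c : 'I_n -> C).

Lemma eigen_weighted_norm_le (v : 'rV[C]_n) (a : C) :
  (forall w, 0 <= c w) -> v *m T = a *: v ->
  `|a| * \sum_w c w * `|v 0 w| <= \sum_u `|v 0 u| * \sum_w c w * `|T u w|.
Proof.
move=> c_ge0 Tv.
have -> : `|a| * \sum_w c w * `|v 0 w| = \sum_w c w * `|\sum_u v 0 u * T u w|.
  rewrite mulr_sumr; apply: eq_bigr => w _.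
  have := congr1 (fun M : 'rV_n => M 0 w) Tv; rewrite !mxE => ->.
  by rewrite normrM mulrCA.
apply: (le_trans (y := \sum_w \sum_u c w * (`|v 0 u| * `|T u w|))).
  apply: ler_sum => w _; rewrite -mulr_sumr ler_wpM2l //.
  apply: le_trans (ler_norm_sum _ _ _) _.
  by apply: ler_sum => u _; rewrite normrM.
rewrite exchange_big /=; apply: ler_sum => u _.
by rewrite mulr_sumr; apply: ler_sum => w _; rewrite mulrCA.
Qed.

Hypotheses (c_gt0 : forall w, 0 < c w)
           (row_lt : forall u, \sum_w c w * `|T u w| < c u).

Lemma eigen_norm_lt1 (v : 'rV[C]_n) (a : C) :
  v *m T = a *: v -> v != 0 -> `|a| < 1.
Proof.
move=> Tv v_neq0.
have [u0 vu0] : exists u0, v 0 u0 != 0.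
  apply/existsP; apply: contraR v_neq0; rewrite negb_exists => /forallP v0.
  by apply/eqP/matrixP=> i j; rewrite ord1 mxE; apply/eqP/negPn/v0.
have c_ge0 w : 0 <= c w by exact: ltW.
have S_gt0 : 0 < \sum_w c w * `|v 0 w|.
  rewrite (bigD1 u0) //= ltr_pwDl ?mulr_gt0 ?normr_gt0 //.
  by apply: sumr_ge0 => i _; rewrite mulr_ge0.
rewrite -(ltr_pM2r S_gt0) mul1r.
apply: le_lt_trans (eigen_weighted_norm_le c_ge0 Tv) _.
rewrite [X in _ < X](bigD1 u0) //= (bigD1 u0) //=.
apply: ltr_leD; first by rewrite mulrC ltr_pM2r ?normr_gt0.
by apply: ler_sum => u _; rewrite mulrC ler_wpM2r // ltW.
Qed.

End WeightedRowSums.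

Lemma unitmx_1D_weighted (F : numFieldType) n (T : 'M[F]_n) (c : 'I_n -> F) :
  (forall w, 0 < c w) -> (forall u, \sum_w c w * `|T u w| < c u) ->
  1%:M + T \in unitmx.
Proof.
move=> c_gt0 row_lt; rewrite unitmxE unitfE; apply/negP => /det0P[v v_neq0 v0].
have Tv : v *m T = (-1) *: v.
  by apply/eqP; rewrite scaleN1r -addr_eq0 addrC -{1}[v]mulmx1 -mulmxDr v0.
by have := eigen_norm_lt1 c_gt0 row_lt Tv v_neq0; rewrite normrN normr1 ltxx.
Qed.

Lemma normc_real (R : rcfType) (x : R) : `|x%:C%C| = (`|x|)%:C%C.
Proof. by rewrite normc_def /= expr0n /= addr0 sqrtr_sqr. Qed.

Lemma spectral_radius_lt1_weighted (R : rcfType) n (T : 'M[R]_n) (c : 'I_n -> R) :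
  (forall w, 0 < c w) -> (forall u, \sum_w c w * `|T u w| < c u) ->
  spectral_radius_lt1 T.
Proof.
move=> c_gt0 row_lt z /eigenvalueP[v Tv v_neq0].
apply: (eigen_norm_lt1 (c := fun w => (c w)%:C%C) _ _ Tv v_neq0).
  by move=> w; rewrite ltcR.
move=> u; under eq_bigr do rewrite mxE normc_real -rmorphM.
by rewrite -rmorph_sum ltcR.
Qed.

Section DiagonalMatrices.
Variables (F : numFieldType) (n : nat).
Implicit Types (f g : 'I_n -> F) (X : 'M[F]_n).

Lemma diagfE f : diagf f = diag_mx (\row_j f j).
Proof.
apply/matrixP=> i j; rewrite !mxE.
by case: eqP => [->|_]; rewrite ?mul1r ?mulr1n ?mul0r ?mulr0n.
Qed.

Lemma mul_mx_diagfE m (X : 'M[F]_(m, n)) f i j : (X *m diagf f) i j = X i j * f j.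
Proof. by rewrite diagfE mul_mx_diag !mxE. Qed.

Lemma mul_diagf_mxE m (X : 'M[F]_(n, m)) f i j : (diagf f *m X) i j = f i * X i j.
Proof. by rewrite diagfE mul_diag_mx !mxE. Qed.

Lemma mul_diagf f g : diagf f *m diagf g = diagf (fun i => f i * g i).
Proof.
apply/matrixP=> i j; rewrite mul_mx_diagfE !mxE -mulrA.
by case: eqP => [->|]; rewrite ?mul0r.
Qed.

Lemma add_diagf f g : diagf f + diagf g = diagf (fun i => f i + g i).
Proof. by apply/matrixP=> i j; rewrite !mxE mulrDr. Qed.

Lemma diagf_unitmx f : (forall i, f i != 0) -> diagf f \in unitmx.
Proof.
move=> f_neq0; rewrite diagfE unitmxE det_diag unitfE.
by apply/prodf_neq0 => i _; rewrite mxE.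
Qed.

Lemma invmx_diagf f :
  (forall i, f i != 0) -> invmx (diagf f) = diagf (fun i => (f i)^-1).
Proof.
move=> f_neq0; rewrite -[RHS](mulKmx (diagf_unitmx f_neq0)) mul_diagf.
suff -> : diagf (fun i => f i * (f i)^-1) = 1%:M by rewrite mulmx1.
by apply/matrixP=> i j; rewrite !mxE mulfV // mulr1.
Qed.

Lemma weighted_row_sum_scaled X f g u :
  (forall w, 0 < f w) -> (forall w, 0 < g w) ->
  \sum_w f w / g w * `|(X *m diagf g *m invmx (diagf f)) u w| = \sum_w `|X u w|.
Proof.
move=> f_gt0 g_gt0; rewrite invmx_diagf => [|w]; last by rewrite gt_eqF.
apply: eq_bigr => w _; rewrite !mul_mx_diagfE !normrM.
rewrite normfV (gtr0_norm (g_gt0 w)) (gtr0_norm (f_gt0 w)).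
by field; rewrite !gt_eqF.
Qed.

End DiagonalMatrices.

Section SubstochasticSolution.
Variables (R : realFieldType) (n : nat) (N : 'M[R]_n).
Hypothesis col_lt1 : forall v, \sum_u N u v < 1.

Lemma subinvariant_eq0 (e : 'I_n -> R) :
  (forall u, 0 <= e u) -> (forall u, e u <= \sum_v N u v * e v) ->
  forall v, e v = 0.
Proof.
move=> e_ge0 e_sub.
have defect_ge0 v : 0 <= (1 - \sum_u N u v) * e v.
  by rewrite mulr_ge0 // subr_ge0 ltW.
have defect_sum0 : \sum_v (1 - \sum_u N u v) * e v = 0.
  apply/le_anti; rewrite sumr_ge0 // andbT.
  under eq_bigr do rewrite mulrBl mul1r.
  rewrite sumrB subr_le0; apply: le_trans (ler_sum _ (fun u _ => e_sub u)) _.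
  by rewrite exchange_big /=; apply: ler_sum => v _; rewrite mulr_suml.
move=> v; have /eqP := psumr_eq0P (fun w _ => defect_ge0 w) defect_sum0 (i := v) isT.
rewrite mulf_eq0 subr_eq0 => /orP[/eqP col1|/eqP //].
by have := col_lt1 v; rewrite -col1 ltxx.
Qed.

Definition clamp01 (x : R) : R := if x < 0 then 0 else if 1 < x then 1 else x.

Lemma clamp01_itv x : 0 <= clamp01 x <= 1.
Proof.
rewrite /clamp01; case: ltP => [_|x_ge0]; first by rewrite lexx ler01.
by case: ltP => [_|x_le1]; rewrite ?lexx ?ler01 ?x_ge0.
Qed.

Lemma clamp01_nearest x t : 0 <= t <= 1 -> `|clamp01 x - x| <= `|t - x|.
Proof.
move=> /andP[t_ge0 t_le1]; rewrite /clamp01.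
case: ltP => [x_lt0|x_ge0]; first by rewrite !ger0_norm; lra.
case: ltP => [x_gt1|_]; last by rewrite subrr normr0.
by rewrite !ler0_norm; lra.
Qed.

Hypotheses (N_ge0 : forall u v, 0 <= N u v) (row_le1 : forall u, \sum_v N u v <= 1).

Lemma solution_1DN_ge0 (z : 'cV[R]_n) :
  z + N *m z = const_mx 1 -> forall u, 0 <= z u 0.
Proof.
move=> z_eq; pose e u := `|clamp01 (z u 0) - z u 0|.
have z_eqE u : z u 0 = 1 - \sum_v N u v * z v 0.
  by have := congr1 (fun M : 'cV_n => M u 0) z_eq; rewrite !mxE => <-; rewrite addrK.
have e_sub u : e u <= \sum_v N u v * e v.
  pose t := 1 - \sum_v N u v * clamp01 (z v 0).
  have t_itv : 0 <= t <= 1.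
    rewrite /t subr_ge0 lerBlDr lerDl sumr_ge0 => [|v _]; last first.
      by rewrite mulr_ge0 //; case/andP: (clamp01_itv (z v 0)).
    rewrite andbT; apply: le_trans (row_le1 u); apply: ler_sum => v _.
    by rewrite ler_piMr //; case/andP: (clamp01_itv (z v 0)).
  apply: le_trans (clamp01_nearest _ t_itv) _.
  have -> : t - z u 0 = \sum_v N u v * (z v 0 - clamp01 (z v 0)).
    under [RHS]eq_bigr do rewrite mulrBr.
    by rewrite sumrB z_eqE /t; ring.
  apply: le_trans (ler_norm_sum _ _ _) _; apply: ler_sum => v _.
  by rewrite normrM ger0_norm // distrC.
move=> u; have /eqP := subinvariant_eq0 (fun _ => normr_ge0 _) e_sub u.
by rewrite normr_eq0 subr_eq0 => /eqP <-; case/andP: (clamp01_itv (z u 0)).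
Qed.

End SubstochasticSolution.

Section GraphMatrices.
Variables (R : numFieldType) (n : nat) (adj : rel 'I_n).

Lemma sum_adjmxM (u : 'I_n) (f : 'I_n -> R) :
  \sum_w adjmx R adj u w * f w = \sum_(w in nbhd adj u) f w.
Proof.
rewrite [RHS]big_mkcond /=; apply: eq_bigr => w _.
by rewrite mxE /nbhd inE; case: (adj u w); rewrite ?mul1r ?mul0r.
Qed.

Lemma adjmx_sym : symmetric adj -> forall u v, adjmx R adj u v = adjmx R adj v u.
Proof. by move=> adj_sym u v; rewrite !mxE adj_sym. Qed.

Lemma sum_adjmx (u : 'I_n) : \sum_w adjmx R adj u w = (deg adj u)%:R.
Proof.
rewrite /deg -sumr_const -(sum_adjmxM u (fun=> 1)).
by apply: eq_bigr => w _; rewrite mulr1.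
Qed.

Lemma sum_norm_adjmx (u : 'I_n) : \sum_w `|adjmx R adj u w| = (deg adj u)%:R.
Proof. by rewrite -sum_adjmx; apply: eq_bigr => w _; rewrite mxE normr_nat. Qed.

Lemma degmx_diagf : degmx R adj = diagf (fun u => (deg adj u)%:R).
Proof. by apply/matrixP=> i j; rewrite !mxE. Qed.

Lemma sum_norm_laplacian_le (u : 'I_n) :
  \sum_w `|(degmx R adj - adjmx R adj) u w| <= (deg adj u)%:R *+ 2.
Proof.
under eq_bigr do rewrite mxE [X in `|_ + X|]mxE.
apply: le_trans (ler_sum _ (fun w _ => ler_normB _ _)) _.
rewrite big_split /= sum_norm_adjmx mulr2n lerD2r degmx_diagf (bigD1 u) //=.
rewrite big1 => [|w /negbTE w_neq].
  by rewrite !mxE eqxx mul1r addr0 normr_nat.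
by rewrite mxE eq_sym w_neq mul0r normr0.
Qed.

End GraphMatrices.

Section OccupancyMatrix.
Variables (R : realFieldType) (n : nat) (adj : rel 'I_n) (beta gamma : 'I_n -> R).
Hypotheses (beta_gt0 : forall u, 0 < beta u) (gamma_gt0 : forall u, 0 < gamma u)
           (deg_lt : forall u, (deg adj u)%:R * (gamma u / beta u) < 1).

Local Notation A := (adjmx R adj).
Local Notation B := (diagf beta).
Local Notation Gam := (diagf gamma).
Local Notation T := (A *m Gam *m invmx B).

Lemma deg_lt_ratio u : (deg adj u)%:R < beta u / gamma u.
Proof.
by have := deg_lt u; rewrite mulrA ltr_pdivrMr // mul1r -ltr_pdivlMr.
Qed.

Let beta_neq0 u : beta u != 0. Proof. by rewrite gt_eqF. Qed.

Lemma occupancy_mxE : B + A *m Gam = (1%:M + T) *m B.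
Proof. by rewrite mulmxDl mul1mx mulmxKV // diagf_unitmx // => u; exact: beta_neq0. Qed.

Lemma occupancy_mx_unit : B + A *m Gam \in unitmx.
Proof.
rewrite occupancy_mxE unitmx_mul diagf_unitmx ?andbT => [|u]; last exact: beta_neq0.
apply: (unitmx_1D_weighted (c := fun w => beta w / gamma w)) => [w|u].
  by rewrite divr_gt0.
by rewrite weighted_row_sum_scaled // sum_norm_adjmx deg_lt_ratio.
Qed.

Lemma occupancy_weightE u v : T u v = A u v * gamma v / beta v.
Proof.
by rewrite invmx_diagf => [|w]; [rewrite !mul_mx_diagfE | exact: beta_neq0].
Qed.

Hypotheses (adj_sym : symmetric adj)
           (nbhd_le1 : forall u, \sum_(v in nbhd adj u) gamma v / beta v <= 1).

Lemma occupancy_solution_ge0 i :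
  0 <= (invmx (B + A *m Gam) *m const_mx 1 : 'cV[R]_n) i 0.
Proof.
set y := invmx _ *m _.
have ratio_ge0 v : 0 <= gamma v / beta v by rewrite divr_ge0 // ltW.
have T_ge0 u v : 0 <= T u v by rewrite occupancy_weightE -mulrA mulr_ge0 // mxE.
have T_row u : \sum_v T u v <= 1.
  by under eq_bigr do rewrite occupancy_weightE -mulrA; rewrite sum_adjmxM.
have T_col v : \sum_u T u v < 1.
  under eq_bigr => u _ do rewrite occupancy_weightE -mulrA (adjmx_sym R adj_sym).
  by rewrite -mulr_suml sum_adjmx deg_lt.
have By : B *m y + T *m (B *m y) = const_mx 1.
  by rewrite -{1}[B *m y]mul1mx -mulmxDl mulmxA -occupancy_mxE mulKVmx ?occupancy_mx_unit.
have := solution_1DN_ge0 T_col T_ge0 T_row By i.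
by rewrite mul_diagf_mxE pmulr_rge0.
Qed.

End OccupancyMatrix.

Lemma laplacian_spectral_radius_lt1 (R : rcfType) n (adj : rel 'I_n)
  (beta gamma : 'I_n -> R) :
  (forall u, 0 < beta u) -> (forall u, 0 < gamma u) ->
  (forall u, (deg adj u)%:R * (gamma u / beta u) < 1) ->
  spectral_radius_lt1 ((degmx R adj - adjmx R adj) *m diagf gamma
                         *m invmx (diagf beta + degmx R adj *m diagf gamma)).
Proof.
move=> beta_gt0 gamma_gt0 deg_lt.
pose h u := beta u + (deg adj u)%:R * gamma u.
have h_gt0 u : 0 < h u by apply: ltr_wpDr; rewrite ?mulr_ge0 // ltW.
rewrite degmx_diagf mul_diagf add_diagf -degmx_diagf -/h.
apply: (spectral_radius_lt1_weighted (c := fun w => h w / gamma w)) => [w|u].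
  by rewrite divr_gt0.
rewrite weighted_row_sum_scaled //; apply: le_lt_trans (sum_norm_laplacian_le _ _ u) _.
have := deg_lt_ratio beta_gt0 gamma_gt0 deg_lt u.
by rewrite /h mulrDl mulfK ?gt_eqF // mulr2n ltrD2r.
Qed.

Theorem lemma2p3 (R : rcfType) (n : nat) (adj : rel 'I_n)
  (beta gamma lam : 'I_n -> R) :
  simple_graph adj ->
  (forall u, (0 < deg adj u)%N) ->
  local_occupancy adj beta gamma lam ->
  (forall u, 0 < beta u) -> (forall u, 0 < gamma u) -> (forall u, 0 < lam u) ->
  (forall u, (deg adj u)%:R * (gamma u / beta u) < 1) ->
  (forall u, \sum_(v in nbhd adj u) gamma v / beta v <= 1) ->
  let A := adjmx R adj in
  let D := degmx R adj in
  let L := D - A in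
  let B := diagf beta in
  let Gam := diagf gamma in
  let H := B + D *m Gam in
  let y := invmx (B + A *m Gam) *m const_mx 1 : 'cV[R]_n in
  [/\ (B + A *m Gam) \in unitmx,
      (forall i, 0 <= y i 0),
      (forall i, ((B + A *m Gam) *m y) i 0 <= 1)
    & spectral_radius_lt1 (L *m Gam *m invmx H)].
Proof.
move=> [adj_sym _] _ _ beta_gt0 gamma_gt0 _ deg_lt nbhd_le1 A D L B Gam H y.
have M_unit := occupancy_mx_unit beta_gt0 gamma_gt0 deg_lt.
split=> [//|i|i|].
- exact: occupancy_solution_ge0.
- by rewrite /y mulKVmx // mxE.
- exact: (laplacian_spectral_radius_lt1 beta_gt0 gamma_gt0 deg_lt).
Qed.
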